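(* Under the hypotheses of Proposition 5.1 (namely: $X$ a real separable Hilbert space, $F:X\to X$ monotone and hemicontinuous, $F(x^\dagger)=y$, $\bar x\in X$, $F$ Fréchet differentiable on $\mathcal B_r(x^\dagger)$ with $r>\|x^\dagger-\bar x\|$ and $x\mapsto F'(x)$ continuous there, the nonlinearity condition $(F'(\tilde x)-F'(x))v=F'(x)g(\tilde x,x,v)$ with $\|g(\tilde x,x,v)\|\le k_0\|\tilde x-x\|\|v\|$ for all $\tilde x,x\in\mathcal B_r(x^\dagger)$, $v\in X$, and $k_0\|x^\dagger-\bar x\|<2$), if moreover $x^\dagger-\bar x\perp\mathcal N(F'(x^\dagger))$, then $\lim_{\alpha\to0}\|x_\alpha-x^\dagger\|=0$, where $x_\alpha$ solves $F(x_\alpha)+\alpha(x_\alpha-\bar x)=y$.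
   Context: Monotone: $\langle F(x)-F(\tilde x),x-\tilde x\rangle\ge0$; hemicontinuous: $t\mapsto\langle F(x+tv),z\rangle$ continuous on $[0,1]$. $\mathcal N(\cdot)$ denotes the null space; $\mathcal B_r(x^\dagger)$ the closed ball of radius $r$ around $x^\dagger$. *)

From Stdlib Require Import Reals Lra.
Open Scope R_scope.

Record PreHilbert := {
  hcar :> Type;
  hzero : hcar;
  hadd : hcar -> hcar -> hcar;
  hopp : hcar -> hcar;
  hscal : R -> hcar -> hcar;
  hinner : hcar -> hcar -> R;
  hadd_assoc : forall x y z, hadd x (hadd y z) = hadd (hadd x y) z;
  hadd_comm : forall x y, hadd x y = hadd y x;
  hadd_zero : forall x, hadd x hzero = x;
  hadd_opp : forall x, hadd x (hopp x) = hzero;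
  hscal_one : forall x, hscal 1 x = x;
  hscal_assoc : forall a b x, hscal a (hscal b x) = hscal (a * b) x;
  hscal_distr_v : forall a x y, hscal a (hadd x y) = hadd (hscal a x) (hscal a y);
  hscal_distr_s : forall a b x, hscal (a + b) x = hadd (hscal a x) (hscal b x);
  hinner_sym : forall x y, hinner x y = hinner y x;
  hinner_add_l : forall x y z, hinner (hadd x y) z = hinner x z + hinner y z;
  hinner_scal_l : forall a x y, hinner (hscal a x) y = a * hinner x y;
  hinner_pos : forall x, 0 <= hinner x x;
  hinner_def : forall x, hinner x x = 0 -> x = hzero
}.

Section Ops.
Context {X : PreHilbert}.
Definition hsub (x y : X) : X := hadd X x (hopp X y).
Definition hnorm (x : X) : R := sqrt (hinner X x x).
Definition in_ball (c : X) (r : R) (x : X) : Prop := hnorm (hsub x c) <= r.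
End Ops.

Definition complete (X : PreHilbert) : Prop :=
  forall u : nat -> X,
    (forall eps, 0 < eps -> exists N, forall m n, (N <= m)%nat -> (N <= n)%nat ->
        hnorm (hsub (u m) (u n)) < eps) ->
    exists l : X, forall eps, 0 < eps -> exists N, forall n, (N <= n)%nat ->
        hnorm (hsub (u n) l) < eps.

Definition separable (X : PreHilbert) : Prop :=
  exists d : nat -> X, forall (x : X) eps, 0 < eps -> exists n, hnorm (hsub x (d n)) < eps.

Definition separable_hilbert (X : PreHilbert) : Prop := complete X /\ separable X.

Definition monotone {X : PreHilbert} (F : X -> X) : Prop :=
  forall x x' : X, 0 <= hinner X (hsub (F x) (F x')) (hsub x x').

Definition hemicontinuous {X : PreHilbert} (F : X -> X) : Prop :=
  forall x v z : X, forall t0, 0 <= t0 <= 1 ->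
    forall eps, 0 < eps -> exists delta, 0 < delta /\
      forall t, 0 <= t <= 1 -> Rabs (t - t0) < delta ->
        Rabs (hinner X (F (hadd X x (hscal X t v))) z
              - hinner X (F (hadd X x (hscal X t0 v))) z) < eps.

Definition bounded_linear {X : PreHilbert} (A : X -> X) : Prop :=
  (forall x y, A (hadd X x y) = hadd X (A x) (A y)) /\
  (forall a x, A (hscal X a x) = hscal X a (A x)) /\
  (exists C, forall x, hnorm (A x) <= C * hnorm x).

Definition frechet_deriv_at {X : PreHilbert} (F : X -> X) (x : X) (A : X -> X) : Prop :=
  bounded_linear A /\
  forall eps, 0 < eps -> exists delta, 0 < delta /\
    forall h : X, hnorm h < delta ->
      hnorm (hsub (hsub (F (hadd X x h)) (F x)) (A h)) <= eps * hnorm h.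

Definition C1_on_ball {X : PreHilbert} (F : X -> X) (DF : X -> X -> X) (c : X) (r : R) : Prop :=
  (forall x, in_ball c r x -> frechet_deriv_at F x (DF x)) /\
  (forall x, in_ball c r x -> forall eps, 0 < eps -> exists delta, 0 < delta /\
     forall x', in_ball c r x' -> hnorm (hsub x' x) < delta ->
       forall v, hnorm (hsub (DF x' v) (DF x v)) <= eps * hnorm v).

Definition nonlinearity_condition {X : PreHilbert} (DF : X -> X -> X) (c : X) (r k0 : R) : Prop :=
  exists g : X -> X -> X -> X,
    forall xt x v : X, in_ball c r xt -> in_ball c r x ->
      hsub (DF xt v) (DF x v) = DF x (g xt x v) /\
      hnorm (g xt x v) <= k0 * hnorm (hsub xt x) * hnorm v.

(* The regularized solutions satisfy F x_a - F x^† = -a (x_a - xbar), so testing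
   monotonicity of F at x^† itself gives |x_a - x^†| <= |x^† - xbar|, and testing it at
   x^† - s w, where F is approximately F x^† - s A w with A = F'(x^†), gives
   |x_a - x^†|^2 <= |d - A w| |d| + o(1) as a -> 0, for d = x^† - xbar and every w.
   It remains to see that d lies in the closure of the range of A. The derivative of a
   monotone map is positive semidefinite; for such an A the residual q = d - p of the best
   approximation p of d from the closure of range A is orthogonal to range A, which
   forces A q = 0, hence <d, q> = 0 and q = 0. *)

From Stdlib Require Import Reals Lra Lia ClassicalEpsilon Classical.
Open Scope R_scope.

Section InnerProduct.
Context {X : PreHilbert}.
Implicit Types (x y z : X) (a : R).

Lemma hscal_0_l x : hscal X 0 x = hzero X.
Proof.
  assert (Hdup : hscal X 0 x = hadd X (hscal X 0 x) (hscal X 0 x)).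
  { rewrite <- hscal_distr_s. f_equal. ring. }
  set (u := hscal X 0 x) in *.
  rewrite <- (hadd_opp X u). rewrite Hdup at 2.
  rewrite <- hadd_assoc, hadd_opp, hadd_zero. reflexivity.
Qed.

Lemma hsub_eq0 x y : hsub x y = hzero X -> x = y.
Proof.
  unfold hsub. intros E.
  rewrite <- (hadd_zero X x), <- (hadd_opp X y), (hadd_comm X y), hadd_assoc, E.
  rewrite hadd_comm. apply hadd_zero.
Qed.

Lemma hinner_0_l y : hinner X (hzero X) y = 0.
Proof. rewrite <- (hscal_0_l y), hinner_scal_l. ring. Qed.

Lemma hinner_opp_l x y : hinner X (hopp X x) y = - hinner X x y.
Proof.
  assert (H := hinner_add_l X x (hopp X x) y).
  rewrite hadd_opp, hinner_0_l in H. lra.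
Qed.

Lemma hinner_add_r x y z : hinner X x (hadd X y z) = hinner X x y + hinner X x z.
Proof. rewrite !(hinner_sym X x). apply hinner_add_l. Qed.

Lemma hinner_scal_r a x y : hinner X x (hscal X a y) = a * hinner X x y.
Proof. rewrite !(hinner_sym X x). apply hinner_scal_l. Qed.

Lemma hinner_opp_r x y : hinner X x (hopp X y) = - hinner X x y.
Proof. rewrite !(hinner_sym X x). apply hinner_opp_l. Qed.

Lemma hinner_0_r y : hinner X y (hzero X) = 0.
Proof. rewrite hinner_sym. apply hinner_0_l. Qed.

End InnerProduct.

Ltac hinner_expand := unfold hsub in *;
  repeat rewrite ?hinner_add_l, ?hinner_scal_l, ?hinner_opp_l, ?hinner_0_l,
    ?hinner_add_r, ?hinner_scal_r, ?hinner_opp_r, ?hinner_0_r in *.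

Lemma quadratic_discriminant_le (A B C : R) :
  0 <= C -> (forall t, 0 <= A - 2 * t * B + t * t * C) -> B * B <= A * C.
Proof.
  intros HC H. destruct (Req_dec C 0) as [->|HC0].
  - destruct (Req_dec B 0) as [->|HB0]; [specialize (H 0); nra|].
    specialize (H ((A + 1) / (2 * B))).
    assert (2 * ((A + 1) / (2 * B)) * B = A + 1) by (field; auto). nra.
  - specialize (H (B / C)).
    assert (2 * (B / C) * B = 2 * (B * B) / C) by (field; auto).
    assert ((B / C) * (B / C) * C = (B * B) / C) by (field; auto).
    assert (B * B / C <= A) by lra.
    apply Rmult_le_reg_r with (/ C); [apply Rinv_0_lt_compat; lra|].
    replace (A * C * / C) with A by (field; auto). lra.
Qed.

Lemma quadratic_linear_coef_eq0 (B C : R) :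
  0 <= C -> (forall t, 0 <= t * B + t * t * C) -> B = 0.
Proof.
  intros HC H. assert ((- B / 2) * (- B / 2) <= 0 * C).
  { apply quadratic_discriminant_le; auto. intros t. specialize (H t). lra. }
  nra.
Qed.

Lemma inv_INR_S_lt (x : R) : 0 < x -> exists N, forall n, (N <= n)%nat -> / INR (S n) < x.
Proof.
  intros Hx. destruct (archimed_cor1 x Hx) as [N [HN HN0]]. exists N. intros n Hn.
  eapply Rle_lt_trans; [|apply HN]. apply Rinv_le_contravar.
  - apply lt_0_INR; auto.
  - apply le_INR. lia.
Qed.

Lemma mul_le_of_le_div_add1 (x K b : R) :
  0 <= x -> 0 <= K -> 0 <= b -> x <= b / (K + 1) -> x * K <= b.
Proof.
  intros Hx HK Hb Hxb.
  apply Rmult_le_compat_r with (r := K + 1) in Hxb; [|lra].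
  replace (b / (K + 1) * (K + 1)) with b in Hxb by (field; lra). nra.
Qed.

Section Norm.
Context {X : PreHilbert}.
Implicit Types (x y : X).

Lemma hnorm_ge0 x : 0 <= hnorm x.
Proof. apply sqrt_pos. Qed.

Lemma hnorm_mul_self x : hnorm x * hnorm x = hinner X x x.
Proof. apply sqrt_sqrt, hinner_pos. Qed.

Lemma hnorm_scal a x : hnorm (hscal X a x) = Rabs a * hnorm x.
Proof.
  unfold hnorm. rewrite hinner_scal_l, hinner_scal_r, <- Rmult_assoc, sqrt_mult.
  - change (a * a) with (Rsqr a). rewrite sqrt_Rsqr_abs. reflexivity.
  - apply Rle_0_sqr.
  - apply hinner_pos.
Qed.

Lemma hnorm_lt_of_hinner_lt x e : 0 < e -> hinner X x x < e * e -> hnorm x < e.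
Proof.
  intros He Hx. rewrite <- hnorm_mul_self in Hx. generalize (hnorm_ge0 x). nra.
Qed.

Lemma hinner_abs_le x y : Rabs (hinner X x y) <= hnorm x * hnorm y.
Proof.
  assert (H : hinner X x y * hinner X x y <= hinner X x x * hinner X y y).
  { apply quadratic_discriminant_le; [apply hinner_pos|]. intros t.
    assert (P := hinner_pos X (hsub x (hscal X t y))). hinner_expand.
    rewrite (hinner_sym X y x) in P. lra. }
  rewrite <- !hnorm_mul_self in H.
  apply Rsqr_incr_0_var.
  - rewrite <- Rsqr_abs. unfold Rsqr. nra.
  - apply Rmult_le_pos; apply hnorm_ge0.
Qed.

Lemma hinner_le_mul_norm x y : hinner X x y <= hnorm x * hnorm y.
Proof. generalize (hinner_abs_le x y) (Rle_abs (hinner X x y)). lra. Qed.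

Lemma hinner_ge_opp_mul_norm x y : - (hnorm x * hnorm y) <= hinner X x y.
Proof. generalize (hinner_abs_le x y) (Rle_abs (- hinner X x y)). rewrite Rabs_Ropp. lra. Qed.

Lemma in_ball_center (c : X) r : 0 <= r -> in_ball c r c.
Proof. intros Hr. unfold in_ball, hnorm, hsub. rewrite hadd_opp, hinner_0_l, sqrt_0. exact Hr. Qed.

End Norm.

Lemma exists_small_scale {X : PreHilbert} (v : X) (delta : R) :
  0 < delta -> exists t, 0 < t /\ hnorm (hscal X t v) < delta.
Proof.
  intros Hd. assert (Hv := hnorm_ge0 v).
  exists (delta / 2 / (hnorm v + 1)). split.
  - apply Rdiv_lt_0_compat; lra.
  - rewrite hnorm_scal, Rabs_pos_eq by (apply Rlt_le, Rdiv_lt_0_compat; lra).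
    assert (delta / 2 / (hnorm v + 1) * hnorm v <= delta / 2); [|lra].
    apply mul_le_of_le_div_add1; try lra. apply Rlt_le, Rdiv_lt_0_compat; lra.
Qed.

Lemma frechet_deriv_monotone_psd {X : PreHilbert} (F A : X -> X) x :
  monotone F -> frechet_deriv_at F x A -> forall v, 0 <= hinner X (A v) v.
Proof.
  intros Hmono [[_ [Ascal _]] Hfr] v.
  assert (Hvv := hinner_pos X v).
  apply Ropp_le_cancel. rewrite Ropp_0.
  apply Rle_plus_epsilon. intros g Hg.
  set (eta := g / (hinner X v v + 1)).
  assert (Heta : 0 < eta) by (apply Rdiv_lt_0_compat; lra).
  destruct (Hfr eta Heta) as [delta [Hdelta Hrem]].
  destruct (exists_small_scale v delta Hdelta) as [t [Ht Htv]].
  specialize (Hrem _ Htv). rewrite Ascal, hnorm_scal, Rabs_pos_eq in Hrem by lra.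
  set (rho := hsub (hsub (F (hadd X x (hscal X t v))) (F x)) (hscal X t (A v))) in Hrem.
  assert (Hrho := hinner_le_mul_norm rho v).
  assert (Hmon := Hmono (hadd X x (hscal X t v)) x).
  assert (Hgrowth : 0 <= hinner X (hsub (F (hadd X x (hscal X t v))) (F x)) v).
  { apply Rmult_le_reg_l with t; [lra|].
    replace (hsub (hadd X x (hscal X t v)) x) with (hscal X t v) in Hmon.
    - rewrite hinner_scal_r in Hmon. lra.
    - unfold hsub. rewrite (hadd_comm X x), <- hadd_assoc, hadd_opp, hadd_zero. reflexivity. }
  assert (Hsplit : hinner X rho v
     = hinner X (hsub (F (hadd X x (hscal X t v))) (F x)) v - t * hinner X (A v) v).
  { unfold rho. unfold hsub at 1. rewrite hinner_add_l, hinner_opp_l, hinner_scal_l. ring. }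
  assert (Hmul : t * - hinner X (A v) v <= t * (eta * hinner X v v)).
  { rewrite <- hnorm_mul_self. assert (Hn := hnorm_ge0 v). nra. }
  apply Rmult_le_reg_l in Hmul; [|lra].
  assert (eta * hinner X v v < g); [|lra].
  unfold eta. apply Rmult_lt_reg_r with (hinner X v v + 1); [lra|].
  field_simplify; lra.
Qed.

Lemma exists_minimizing_sequence {T : Type} (f : T -> R) (w0 : T) :
  (forall w, 0 <= f w) ->
  exists m (ws : nat -> T), (forall w, m <= f w) /\ (forall n, f (ws n) < m + / INR (S n)).
Proof.
  intros Hf.
  destruct (completeness (fun r => exists w, r = - f w)) as [M [Hub Hlub]].
  - exists 0. intros r [w ->]. generalize (Hf w). lra.
  - exists (- f w0), w0. reflexivity.
  - assert (Hnear : forall n, exists w, f w < - M + / INR (S n)).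
    { intros n. assert (Hpos : 0 < / INR (S n)) by (apply Rinv_0_lt_compat, lt_0_INR; lia).
      apply NNPP. intros Hnone.
      assert (M <= M - / INR (S n)); [|lra].
      apply Hlub. intros r [w ->].
      apply Rnot_lt_le. intros Hlt. apply Hnone. exists w. lra. }
    destruct (choice _ Hnear) as [ws Hws].
    exists (- M), ws. split; [|exact Hws].
    intros w. assert (- f w <= M) by (apply Hub; exists w; reflexivity). lra.
Qed.

Section ClosureRange.
Context {X : PreHilbert}.
Variable A : X -> X.
Hypothesis Aadd : forall x y, A (hadd X x y) = hadd X (A x) (A y).
Hypothesis Ascal : forall a x, A (hscal X a x) = hscal X a (A x).

Section Projection.
Variable d : X.

Let dist2 (w : X) : R := hinner X (hsub d (A w)) (hsub d (A w)).

Lemma dist2_shift w u t :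
  dist2 (hadd X w (hscal X t u))
  = dist2 w - 2 * t * hinner X (hsub d (A w)) (A u) + t * t * hinner X (A u) (A u).
Proof.
  unfold dist2. rewrite Aadd, Ascal. hinner_expand.
  rewrite (hinner_sym X (A u) (A w)), (hinner_sym X (A u) d), (hinner_sym X (A w) d). ring.
Qed.

Lemma dist2_parallelogram w w' :
  dist2 w + dist2 w'
  = 2 * dist2 (hscal X (/ 2) (hadd X w w'))
    + / 2 * hinner X (hsub (A w) (A w')) (hsub (A w) (A w')).
Proof.
  unfold dist2. rewrite Ascal, Aadd. hinner_expand.
  rewrite (hinner_sym X (A w') (A w)), (hinner_sym X (A w) d), (hinner_sym X (A w') d). field.
Qed.

Variables (m : R) (ws : nat -> X).
Hypothesis Hmin : forall w, m <= dist2 w.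
Hypothesis Hws : forall n, dist2 (ws n) < m + / INR (S n).

Lemma minimizing_range_cauchy n k :
  hinner X (hsub (A (ws n)) (A (ws k))) (hsub (A (ws n)) (A (ws k)))
  <= 2 * / INR (S n) + 2 * / INR (S k).
Proof.
  assert (Hpar := dist2_parallelogram (ws n) (ws k)).
  generalize (Hws n) (Hws k) (Hmin (hscal X (/ 2) (hadd X (ws n) (ws k)))). lra.
Qed.

Variable p : X.
Hypothesis Hlim : forall eps, 0 < eps ->
  exists N, forall n, (N <= n)%nat -> hnorm (hsub (A (ws n)) p) < eps.

Lemma minimizing_range_residual_orth u : hinner X (hsub d p) (A u) = 0.
Proof.
  (* Minimality along the lines [ws n + t u], as n -> oo, leaves a quadratic in t
     with no constant term that is nonnegative. *)
  set (K := hinner X (A u) (A u)).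
  apply Rmult_eq_reg_l with (-2); [|lra]. rewrite Rmult_0_r.
  apply (quadratic_linear_coef_eq0 _ K (hinner_pos X (A u))). intros t.
  apply Rle_plus_epsilon. intros g Hg.
  set (L := 2 * Rabs t * hnorm (A u)).
  assert (HL : 0 <= L) by (unfold L; generalize (Rabs_pos t) (hnorm_ge0 (A u)); nra).
  assert (Hg' : 0 < g / 2 / (L + 1)) by (apply Rdiv_lt_0_compat; lra).
  destruct (Hlim _ Hg') as [N1 HN1].
  destruct (inv_INR_S_lt (g / 2)) as [N2 HN2]; [lra|].
  set (n := max N1 N2).
  specialize (HN1 n (Nat.le_max_l _ _)). specialize (HN2 n (Nat.le_max_r _ _)).
  assert (Happrox : Rabs (2 * t * hinner X (hsub (A (ws n)) p) (A u)) <= g / 2).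
  { rewrite !Rabs_mult, (Rabs_pos_eq 2) by lra.
    assert (Hcs := hinner_abs_le (hsub (A (ws n)) p) (A u)).
    apply Rmult_le_compat_l with (r := 2 * Rabs t) in Hcs; [|generalize (Rabs_pos t); lra].
    assert (hnorm (hsub (A (ws n)) p) * L <= g / 2).
    { apply mul_le_of_le_div_add1; try lra. apply hnorm_ge0. }
    unfold L in *. lra. }
  assert (Hshift := dist2_shift (ws n) u t).
  assert (Hres : hinner X (hsub d (A (ws n))) (A u)
                 = hinner X (hsub d p) (A u) - hinner X (hsub (A (ws n)) p) (A u)).
  { hinner_expand. ring. }
  generalize (Hmin (hadd X (ws n) (hscal X t u))) (Hws n)
    (Rle_abs (2 * t * hinner X (hsub (A (ws n)) p) (A u))).
  rewrite Hres in Hshift. fold K in Hshift. lra.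
Qed.

End Projection.

Lemma exists_proj_closure_range (HC : complete X) (d : X) :
  exists p, (forall eps, 0 < eps -> exists w, hnorm (hsub (A w) p) < eps)
         /\ (forall u, hinner X (hsub d p) (A u) = 0).
Proof.
  destruct (exists_minimizing_sequence (fun w => hinner X (hsub d (A w)) (hsub d (A w)))
              (hzero X) (fun w => hinner_pos X _)) as [m [ws [Hmin Hws]]].
  destruct (HC (fun n => A (ws n))) as [p Hp].
  - intros eps Heps.
    destruct (inv_INR_S_lt (eps * eps / 4)) as [N HN]; [nra|].
    exists N. intros n k Hn Hk. apply hnorm_lt_of_hinner_lt; [lra|].
    generalize (minimizing_range_cauchy d m ws Hmin Hws n k) (HN n Hn) (HN k Hk). lra.
  - exists p. split.
    + intros eps Heps. destruct (Hp eps Heps) as [N HN]. exists (ws N). exact (HN N (le_n N)).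
    + exact (minimizing_range_residual_orth d m ws Hmin Hws p Hp).
Qed.

End ClosureRange.

Lemma hinner_eq0_of_closure {X : PreHilbert} (A : X -> X) (p q : X) :
  (forall eps, 0 < eps -> exists w, hnorm (hsub (A w) p) < eps) ->
  (forall u, hinner X q (A u) = 0) -> hinner X q p = 0.
Proof.
  intros Hp Hq. assert (Hnq := hnorm_ge0 q).
  apply cond_eq. intros g Hg. rewrite Rminus_0_r.
  destruct (Hp (g / 2 / (hnorm q + 1))) as [w Hw]; [apply Rdiv_lt_0_compat; lra|].
  assert (Hdiff : hinner X q p = - hinner X q (hsub (A w) p)).
  { generalize (Hq w). hinner_expand. lra. }
  rewrite Hdiff, Rabs_Ropp.
  eapply Rle_lt_trans; [apply hinner_abs_le|].
  rewrite Rmult_comm. apply Rle_lt_trans with (g / 2); [|lra].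
  apply mul_le_of_le_div_add1; try lra; apply hnorm_ge0.
Qed.

Section PositiveOperator.
Context {X : PreHilbert}.
Variable A : X -> X.
Hypothesis Aadd : forall x y, A (hadd X x y) = hadd X (A x) (A y).
Hypothesis Ascal : forall a x, A (hscal X a x) = hscal X a (A x).
Hypothesis Apsd : forall v, 0 <= hinner X (A v) v.

Lemma psd_orth_range_in_kernel q : (forall u, hinner X q (A u) = 0) -> A q = hzero X.
Proof.
  intros Hq. apply hinner_def.
  apply (quadratic_linear_coef_eq0 _ (hinner X (A (A q)) (A q)) (Apsd (A q))).
  intros t. assert (Hpos := Apsd (hadd X q (hscal X t (A q)))).
  rewrite Aadd, Ascal in Hpos. hinner_expand.
  rewrite (hinner_sym X (A q) q), (hinner_sym X (A (A q)) q), !Hq in Hpos. lra.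
Qed.

Lemma closure_range_of_orth_kernel (HC : complete X) (d : X) :
  (forall v, A v = hzero X -> hinner X d v = 0) ->
  forall eps, 0 < eps -> exists w, hnorm (hsub d (A w)) < eps.
Proof.
  intros Horth.
  destruct (exists_proj_closure_range A Aadd Ascal HC d) as [p [Hclos Hres]].
  assert (Hq0 : hsub d p = hzero X).
  { apply hinner_def.
    assert (Hdq : hinner X d (hsub d p) = 0)
      by (apply Horth, psd_orth_range_in_kernel, Hres).
    assert (Hpq : hinner X (hsub d p) p = 0) by exact (hinner_eq0_of_closure A p _ Hclos Hres).
    rewrite hinner_sym in Hdq. revert Hdq Hpq. hinner_expand. lra. }
  rewrite (hsub_eq0 _ _ Hq0).
  intros eps Heps. destruct (Hclos eps Heps) as [w Hw]. exists w.
  unfold hnorm in *. replace (hinner X (hsub p (A w)) (hsub p (A w)))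
    with (hinner X (hsub (A w) p) (hsub (A w) p)); [exact Hw|].
  hinner_expand. rewrite (hinner_sym X p (A w)). ring.
Qed.

End PositiveOperator.

Section Regularization.
Context {X : PreHilbert}.
Variable F : X -> X.
Hypothesis Hmono : monotone F.
Variables (a b c : X) (alpha : R).
Hypothesis Halpha : 0 < alpha.
Hypothesis Heq : hadd X (F a) (hscal X alpha (hsub a c)) = F b.

Lemma regularized_error_energy :
  hinner X (hsub a b) (hsub a b) + hinner X (hsub b c) (hsub a b) <= 0.
Proof.
  assert (HFb : forall V, hinner X (F b) V
                = hinner X (F a) V + alpha * (hinner X a V - hinner X c V)).
  { intros V. rewrite <- Heq. hinner_expand. ring. }
  assert (Hmon := Hmono a b). hinner_expand. rewrite !HFb in Hmon.
  apply Rmult_le_reg_l with alpha; lra.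
Qed.

Lemma regularized_error_le : hnorm (hsub a b) <= hnorm (hsub b c).
Proof.
  assert (Hen := regularized_error_energy).
  assert (Hcs := hinner_ge_opp_mul_norm (hsub b c) (hsub a b)).
  rewrite <- hnorm_mul_self in Hen.
  generalize (hnorm_ge0 (hsub a b)) (hnorm_ge0 (hsub b c)). nra.
Qed.

Lemma regularized_error_sq_bound (s eta : R) (w z : X) :
  0 < s ->
  hnorm (hsub (hsub (F (hadd X b (hscal X (- s) w))) (F b)) (hscal X (- s) z))
    <= eta * (s * hnorm w) ->
  hinner X (hsub a b) (hsub a b)
  <= hnorm (hsub (hsub b c) z) * hnorm (hsub b c)
     + eta * hnorm w * (hnorm (hsub b c) + s * hnorm w)
     + s * (hnorm z * hnorm w)
     + alpha / s * (hnorm (hsub b c) * (hnorm (hsub b c) + 2 * s * hnorm w)).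
Proof.
  intros Hs Hrem.
  set (e := hsub a b). set (d := hsub b c).
  set (G := F (hadd X b (hscal X (- s) w))).
  set (rho := hsub (hsub G (F b)) (hscal X (- s) z)) in Hrem.
  set (D := hnorm d). set (E := hnorm e). set (W := hnorm w). set (Z := hnorm z).
  set (Rn := hnorm rho).
  assert (HE : 0 <= E) by apply hnorm_ge0. assert (HW : 0 <= W) by apply hnorm_ge0.
  assert (HZ : 0 <= Z) by apply hnorm_ge0. assert (HRn : 0 <= Rn) by apply hnorm_ge0.
  assert (HED : E <= D) by apply regularized_error_le.
  assert (Hen := regularized_error_energy). fold e d in Hen.
  assert (Hdiff : forall V, hinner X (hsub (F a) G) V
          = s * hinner X z V - hinner X rho V - alpha * (hinner X e V + hinner X d V)).
  { intros V.
    assert (HFa : hinner X (F a) V = hinner X (F b) V - alpha * hinner X (hsub a c) V)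
      by (rewrite <- Heq; hinner_expand; ring).
    revert HFa. unfold rho, e, d. hinner_expand. lra. }
  assert (Hstep : forall V, hinner X V (hsub a (hadd X b (hscal X (- s) w)))
                            = hinner X V e + s * hinner X V w)
    by (intros V; unfold e; hinner_expand; ring).
  (* Monotonicity at the test point [b - s w], where [F] equals [F b - s z] up to [rho]. *)
  assert (Hmon := Hmono a (hadd X b (hscal X (- s) w))). fold G in Hmon.
  rewrite Hstep, !Hdiff in Hmon.
  assert (Hde : hinner X d e = hinner X z e + hinner X (hsub d z) e)
    by (hinner_expand; ring).
  assert (B1 := hinner_ge_opp_mul_norm (hsub d z) e).
  assert (B2 := hinner_ge_opp_mul_norm rho e).
  assert (B3 := hinner_ge_opp_mul_norm rho w).
  assert (B4 := hinner_le_mul_norm z w).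
  assert (B5 := hinner_ge_opp_mul_norm e w).
  assert (B6 := hinner_ge_opp_mul_norm d e).
  assert (B7 := hinner_ge_opp_mul_norm d w).
  assert (B8 := hinner_pos X e).
  fold D E W Z Rn in B1, B2, B3, B4, B5, B6, B7.
  assert (HRn_le : Rn <= eta * (s * W)) by exact Hrem.
  assert (Hrho_terms : Rn * E + s * (Rn * W) <= s * (eta * W * (D + s * W))).
  { assert (Rn * (E + s * W) <= eta * (s * W) * (D + s * W))
      by (apply Rmult_le_compat; nra). nra. }
  assert (Halpha_terms :
    alpha * (- (hinner X e e + hinner X d e)) + s * (alpha * (- (hinner X e w + hinner X d w)))
    <= alpha * (D * (D + 2 * s * W))).
  { assert (Hee : - (hinner X e e + hinner X d e) <= D * D) by nra.
    assert (Hew : - (hinner X e w + hinner X d w) <= 2 * (D * W)) by nra.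
    apply Rmult_le_compat_l with (r := alpha) in Hee; [|lra].
    apply Rmult_le_compat_l with (r := s * alpha) in Hew; [|nra].
    lra. }
  assert (Hzw : s * (s * hinner X z w) <= s * (s * (Z * W))) by nra.
  assert (Hdz : s * (- hinner X (hsub d z) e) <= s * (hnorm (hsub d z) * D)).
  { assert (hnorm (hsub d z) * E <= hnorm (hsub d z) * D)
      by (apply Rmult_le_compat_l; [apply hnorm_ge0|exact HED]). nra. }
  assert (Hen_s : s * (hinner X e e + hinner X d e) <= 0) by nra.
  assert (Hrho_w : s * - hinner X rho w <= s * (Rn * W)) by nra.
  rewrite Hde in Hen_s.
  apply Rmult_le_reg_l with s; [exact Hs|].
  replace (s * (hnorm (hsub d z) * D + eta * W * (D + s * W) + s * (Z * W)
              + alpha / s * (D * (D + 2 * s * W))))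
    with (s * (hnorm (hsub d z) * D) + s * (eta * W * (D + s * W)) + s * (s * (Z * W))
          + alpha * (D * (D + 2 * s * W))) by (field; lra).
  lra.
Qed.

End Regularization.

Section RegularizedConvergence.
Context {X : PreHilbert}.
Variables (F A : X -> X) (xdag xbar : X) (xa : R -> X).
Hypothesis Hmono : monotone F.
Hypothesis Hderiv : frechet_deriv_at F xdag A.
Hypothesis Hxa : forall alpha, 0 < alpha ->
  hadd X (F (xa alpha)) (hscal X alpha (hsub (xa alpha) xbar)) = F xdag.

Lemma regularized_error_limsup_le (w : X) (b : R) : 0 < b ->
  exists delta, 0 < delta /\ forall alpha, 0 < alpha < delta ->
    hinner X (hsub (xa alpha) xdag) (hsub (xa alpha) xdag)
    <= hnorm (hsub (hsub xdag xbar) (A w)) * hnorm (hsub xdag xbar) + b.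
Proof.
  intros Hb. destruct Hderiv as [[_ [Ascal _]] Hfr].
  (* eta, s and then delta make each of the last three terms of
     [regularized_error_sq_bound] at most [b / 3]. *)
  set (D := hnorm (hsub xdag xbar)). set (W := hnorm w). set (Z := hnorm (A w)).
  assert (HD : 0 <= D) by apply hnorm_ge0. assert (HW : 0 <= W) by apply hnorm_ge0.
  assert (HZ : 0 <= Z) by apply hnorm_ge0.
  set (eta := b / 3 / (W * (D + W) + 1)).
  assert (Heta : 0 < eta) by (apply Rdiv_lt_0_compat; nra).
  destruct (Hfr eta Heta) as [deltaF [HdeltaF Hrem]].
  set (s := Rmin (Rmin 1 (b / 3 / (Z * W + 1))) (deltaF / 2 / (W + 1))).
  assert (Hs0 : 0 < s) by (repeat apply Rmin_pos; try apply Rdiv_lt_0_compat; nra).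
  assert (Hs1 : s <= 1) by (eapply Rle_trans; [apply Rmin_l|apply Rmin_l]).
  assert (HsZ : s * (Z * W) <= b / 3).
  { apply mul_le_of_le_div_add1; try nra. eapply Rle_trans; [apply Rmin_l|apply Rmin_r]. }
  assert (HsW : s * W <= deltaF / 2) by (apply mul_le_of_le_div_add1; try lra; apply Rmin_r).
  set (c := b / 3 / (D * (D + 2 * W) + 1)).
  assert (Hc : 0 < c) by (apply Rdiv_lt_0_compat; nra).
  exists (s * c). split; [nra|]. intros alpha [Halpha Halpha_small].
  assert (Hstep : hnorm (hscal X (- s) w) < deltaF)
    by (rewrite hnorm_scal, Rabs_Ropp, Rabs_pos_eq; fold W; lra).
  specialize (Hrem _ Hstep). rewrite Ascal, hnorm_scal, Rabs_Ropp, Rabs_pos_eq in Hrem by lra.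
  assert (Hbound := regularized_error_sq_bound F Hmono _ _ _ alpha Halpha (Hxa alpha Halpha)
                      s eta w _ Hs0 Hrem).
  fold D W Z in Hbound.
  assert (Hrem_term : eta * W * (D + s * W) <= b / 3).
  { assert (eta * (W * (D + W)) <= b / 3)
      by (apply mul_le_of_le_div_add1; [lra | nra | lra | apply Rle_refl]).
    assert (eta * W * (s * W) <= eta * W * (1 * W))
      by (apply Rmult_le_compat_l; [nra | apply Rmult_le_compat_r; lra]).
    lra. }
  assert (Halpha_term : alpha / s * (D * (D + 2 * s * W)) <= b / 3).
  { assert (Hratio : alpha / s <= c).
    { rewrite <- (Rmult_div_r s c) by lra. unfold Rdiv.
      apply Rmult_le_compat_r; [apply Rlt_le, Rinv_0_lt_compat|]; lra. }
    assert (alpha / s * (D * (D + 2 * W)) <= b / 3)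
      by (apply mul_le_of_le_div_add1;
          [apply Rlt_le, Rdiv_lt_0_compat | nra | lra | exact Hratio]; lra).
    assert (alpha / s * (D * (D + 2 * s * W)) <= alpha / s * (D * (D + 2 * W))); [|lra].
    apply Rmult_le_compat_l; [apply Rlt_le, Rdiv_lt_0_compat; lra|].
    apply Rmult_le_compat_l; nra. }
  lra.
Qed.

Lemma regularized_solution_converges :
  (forall eps, 0 < eps -> exists w, hnorm (hsub (hsub xdag xbar) (A w)) < eps) ->
  forall eps, 0 < eps -> exists delta, 0 < delta /\
    forall alpha, 0 < alpha < delta -> hnorm (hsub (xa alpha) xdag) < eps.
Proof.
  intros Hclos eps Heps.
  set (D := hnorm (hsub xdag xbar)). assert (HD : 0 <= D) by apply hnorm_ge0.
  assert (Hb : 0 < eps * eps / 3 / (D + 1)) by (apply Rdiv_lt_0_compat; nra).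
  destruct (Hclos _ Hb) as [w Hw].
  destruct (regularized_error_limsup_le w (eps * eps / 3)) as [delta [Hdelta Hlim]]; [nra|].
  exists delta. split; [exact Hdelta|]. intros alpha Halpha.
  apply hnorm_lt_of_hinner_lt; [exact Heps|].
  assert (hnorm (hsub (hsub xdag xbar) (A w)) * D <= eps * eps / 3)
    by (apply mul_le_of_le_div_add1; try nra; apply hnorm_ge0).
  specialize (Hlim alpha Halpha). fold D in Hlim. nra.
Qed.

End RegularizedConvergence.

Theorem corollary5p2
  (X : PreHilbert) (HX : separable_hilbert X)
  (F : X -> X) (DF : X -> X -> X) (xdag xbar y : X) (r k0 : R)
  (Hmono : monotone F) (Hhemi : hemicontinuous F)
  (Hy : F xdag = y)
  (Hr : hnorm (hsub xdag xbar) < r)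
  (HC1 : C1_on_ball F DF xdag r)
  (Hnl : nonlinearity_condition DF xdag r k0)
  (Hk0 : k0 * hnorm (hsub xdag xbar) < 2)
  (Horth : forall v : X, DF xdag v = hzero X -> hinner X (hsub xdag xbar) v = 0)
  (xa : R -> X)
  (Hxa : forall alpha, 0 < alpha ->
     hadd X (F (xa alpha)) (hscal X alpha (hsub (xa alpha) xbar)) = y) :
  forall eps, 0 < eps -> exists delta, 0 < delta /\
    forall alpha, 0 < alpha < delta -> hnorm (hsub (xa alpha) xdag) < eps.
Proof.
  subst y.
  assert (Hderiv : frechet_deriv_at F xdag (DF xdag)).
  { apply (proj1 HC1), in_ball_center. generalize (hnorm_ge0 (hsub xdag xbar)). lra. }
  assert (Hpsd := frechet_deriv_monotone_psd F _ xdag Hmono Hderiv).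
  pose proof Hderiv as [[Aadd [Ascal _]] _].
  apply (regularized_solution_converges F (DF xdag) xdag xbar xa Hmono Hderiv Hxa).
  exact (closure_range_of_orth_kernel _ Aadd Ascal Hpsd (proj1 HX) _ Horth).
Qed.
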